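(* Let $P_{XY}$ be a probability distribution on $\mathcal X\times\mathcal Y$ (finite sets) with $X$-marginal $P_X$. For each $n$ let $\mathcal F_n^{P_X}=\{P_X^{\times n}\times Q_{Y^n}: Q_{Y^n}\in\mathcal P(\mathcal Y^n)\}$. Then for every $\varepsilon\in(0,1)$ the limit $\lim_{n\to\infty}\frac1n D_H^\varepsilon(\mathcal F_n^{P_X}\|P_{XY}^{\times n})$ exists and equals $U(X;Y)$. Equivalently, $$U(X;Y)=\mathrm{Stein}(\mathcal F^{P_X}\|P_{XY})=\mathrm{Stein}^\dagger(\mathcal F^{P_X}\|P_{XY}).$$
   Context: $D(P\|Q)=\sum_x P(x)\log\frac{P(x)}{Q(x)}$ (with $0\log(0/q)=0$; $+\infty$ if $P\not\ll Q$). The umlaut information is $U(X;Y)=\min_{Q_Y\in\mathcal P(\mathcal Y)}D(P_X\times Q_Y\|P_{XY})$. For a set $\mathcal F_n$ of distributions on a finite set $\mathcal Z$ (null hypothesis) and a distribution $R$ on $\mathcal Z$ (alternative), a test is a function $T:\mathcal Z\to[0,1]$ (probability of accepting the null); its type I error is $\sup_{Q\in\mathcal F_n}\sum_z Q(z)(1-T(z))$ and its type II error is $\sum_z R(z)T(z)$. $D_H^\varepsilon(\mathcal F_n\|R)=-\log\min\{\text{type II error}:\text{type I error}\le\varepsilon\}$. For $\mathcal F=(\mathcal F_n)_n$ with $\mathcal F_n$ on $\mathcal Z^n$: $\mathrm{Stein}(\mathcal F\|R)=\lim_{\varepsilon\to0}\liminf_{n}\frac1nD_H^\varepsilon(\mathcal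 F_n\|R^{\times n})$ and $\mathrm{Stein}^\dagger(\mathcal F\|R)=\lim_{\varepsilon\to1^-}\limsup_n\frac1nD_H^\varepsilon(\mathcal F_n\|R^{\times n})$. *)

From HB Require Import structures.
From mathcomp Require Import all_boot all_order all_algebra.
From mathcomp Require Import all_classical all_reals all_analysis.
Set Implicit Arguments. Unset Strict Implicit. Unset Printing Implicit Defensive.
Import Order.TTheory GRing.Theory Num.Theory.
Local Open Scope ring_scope.
Local Open Scope classical_set_scope.

Section Defs.
Variable R : realType.

Definition is_dist (T : finType) (P : {ffun T -> R}) : Prop :=
  (forall t, 0 <= P t) /\ \sum_(t : T) P t = 1.

Definition KL (T : finType) (P Q : {ffun T -> R}) : \bar R :=
  if `[< forall t, Q t = 0 -> P t = 0 >] then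
    (\sum_(t : T) (if P t == 0 then 0 else P t * ln (P t / Q t)))%:E
  else +oo%E.

Definition marginalX (X Y : finType) (PXY : {ffun X * Y -> R}) : {ffun X -> R} :=
  [ffun x => \sum_(y : Y) PXY (x, y)].

Definition prod_dist (X Y : finType) (PX : {ffun X -> R}) (QY : {ffun Y -> R})
  : {ffun X * Y -> R} := [ffun xy => PX xy.1 * QY xy.2].

Definition umlaut (X Y : finType) (PXY : {ffun X * Y -> R}) : \bar R :=
  ereal_inf [set KL (prod_dist (marginalX PXY) QY) PXY |
             QY in [set QY : {ffun Y -> R} | is_dist QY]].

Definition iid (Z : finType) (n : nat) (P : {ffun Z -> R}) : {ffun {ffun 'I_n -> Z} -> R} :=
  [ffun z : {ffun 'I_n -> Z} => \prod_(i < n) P (z i)].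

(* tests: functions Z -> [0,1] (probability of accepting the null) *)
Definition is_test (Z : finType) (T : {ffun Z -> R}) : Prop :=
  forall z, 0 <= T z <= 1.

Definition typeI (Z : finType) (F : set {ffun Z -> R}) (T : {ffun Z -> R}) : \bar R :=
  ereal_sup [set (\sum_(z : Z) Q z * (1 - T z))%:E | Q in F].

Definition typeII (Z : finType) (Ralt : {ffun Z -> R}) (T : {ffun Z -> R}) : R :=
  \sum_(z : Z) Ralt z * T z.

Definition DH (Z : finType) (eps : R) (F : set {ffun Z -> R}) (Ralt : {ffun Z -> R})
  : \bar R :=
  let beta := ereal_inf [set (typeII Ralt T)%:E |
                         T in [set T | is_test T /\ (typeI F T <= eps%:E)%E]] in
  (if beta == 0%E then +oo else - (ln (fine beta))%:E)%E.

Definition FPX (X Y : finType) (PX : {ffun X -> R}) (n : nat) : set {ffun {ffun 'I_n -> X * Y} -> R} :=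
  [set [ffun z : {ffun 'I_n -> X * Y} =>
          (\prod_(i < n) PX (z i).1) * QYn [ffun i => (z i).2]]
   | QYn in [set Q : {ffun {ffun 'I_n -> Y} -> R} | is_dist Q]].

End Defs.
Arguments FPX {R X} Y PX n.

(* Let g(y) = D(P_X x delta_y || P_XY) = sum_x P_X(x) ln (P_X(x) / P_XY(x,y)), finite
   exactly for the admissible y (P_X << P_XY(., y)).  Then
   D(P_X x Q || P_XY) = sum_y Q(y) (g(y) + ln Q(y)), and Gibbs' variational
   principle gives U(X;Y) = - ln Z with Z = sum_(y admissible) exp (- g(y)).

   Against the composite null the worst Q_(Y^n) is a point mass, so a test has
   type I error at most eps iff it accepts with P_X^n-probability at least 1 - eps
   for every y^n.  The information density sum_i ln (P_X(x_i) / P_XY(x_i,y_i)),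
   clipped at a level M where it is infinite, has null mean sum_i g_M(y_i) and
   variance at most n M^2, so by Chebyshev it lies within n d of its mean with
   null probability 1 - O(M^2 / (n d^2)).  Thresholding it at mean - n d yields
   type II error at most e^(n d) Z_M^n, where Z_M = sum_y exp (- g_M(y)).
   Conversely, for admissible y^n a test of type I error at most eps keeps null
   mass (1 - eps) / 2 where the density is below mean + n d, and there
   P_XY^n >= e^(- mean - n d) P_X^n; so its type II error is at least
   (1 - eps) / 2 e^(- n d) Z^n.  Finally Z_M -> Z as M -> oo, because
   g_M(y) >= M min P_X for inadmissible y; if no y is admissible, Z = 0 and both
   U(X;Y) and the normalised D_H tend to +oo. *)

From HB Require Import structures.
From mathcomp Require Import all_boot all_order all_algebra.
From mathcomp Require Import all_classical all_reals all_analysis.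
From mathcomp Require Import ring lra.
Import Order.TTheory GRing.Theory Num.Theory.
Local Open Scope ring_scope.
Local Open Scope classical_set_scope.

Set Implicit Arguments. Unset Strict Implicit. Unset Printing Implicit Defensive.

Section IidChebyshev.
Variables (R : realType) (A : finType) (n : nat) (p : A -> R).
Hypotheses (p_ge0 : forall a, 0 <= p a) (p_sum1 : \sum_a p a = 1).

Lemma iid_expect_prod (phi : 'I_n -> A -> R) :
  \sum_(f : {ffun 'I_n -> A}) (\prod_k p (f k)) * \prod_k phi k (f k) =
  \prod_k \sum_a p a * phi k a.
Proof. by rewrite bigA_distr_bigA; apply: eq_bigr => f _; rewrite big_split. Qed.

Variable h : 'I_n -> A -> R.
Hypothesis h_centered : forall k, \sum_a p a * h k a = 0.

Lemma iid_expect_mul_centered i j :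
  \sum_(f : {ffun 'I_n -> A}) (\prod_k p (f k)) * (h i (f i) * h j (f j)) =
  if i == j then \sum_a p a * h i a ^+ 2 else 0.
Proof.
pose phi k a := (if k == i then h i a else 1) * (if k == j then h j a else 1).
have pick (l : 'I_n) (f : {ffun 'I_n -> A}) :
    \prod_k (if k == l then h l (f k) else 1) = h l (f l).
  by rewrite -big_mkcond big_pred1_eq.
rewrite (eq_bigr (fun f : {ffun 'I_n -> A} =>
    (\prod_k p (f k)) * \prod_k phi k (f k))) => [|f _]; last first.
  by rewrite big_split /= !pick.
rewrite iid_expect_prod (bigD1 i) //= /phi eqxx.
have [<-|nij] := eqVneq i j.
  rewrite [X in _ * X]big1 ?mulr1 => [|k /negbTE ->].
    by under eq_bigr do rewrite -expr2.
  by under eq_bigr do rewrite !mulr1; exact: p_sum1.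
by under eq_bigr do rewrite mulr1; rewrite h_centered mul0r.
Qed.

Lemma iid_expect_sqr_sum :
  \sum_(f : {ffun 'I_n -> A}) (\prod_k p (f k)) * (\sum_k h k (f k)) ^+ 2 =
  \sum_k \sum_a p a * h k a ^+ 2.
Proof.
have sqr_sum f : (\sum_k h k (f k)) ^+ 2 = \sum_i \sum_j h i (f i) * h j (f j).
  by rewrite expr2 big_distrl; apply: eq_bigr => i _; rewrite big_distrr.
under eq_bigr do rewrite sqr_sum big_distrr /=.
rewrite exchange_big; apply: eq_bigr => i _.
under eq_bigr do rewrite big_distrr /=.
rewrite exchange_big (bigD1 i) //= iid_expect_mul_centered eqxx.
rewrite [X in _ + X]big1 ?addr0 // => j ji.
by rewrite iid_expect_mul_centered eq_sym (negbTE ji).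
Qed.

Lemma iid_chebyshev (B t : R) : (forall k a, `|h k a| <= B) -> 0 < t ->
  \sum_(f : {ffun 'I_n -> A}) (\prod_k p (f k)) *
     (if t <= `|\sum_k h k (f k)| then 1 else 0) <= n%:R * B ^+ 2 / t ^+ 2.
Proof.
move=> hB t0.
have w_ge0 (f : {ffun 'I_n -> A}) : 0 <= \prod_k p (f k) by apply: prodr_ge0.
apply: (@le_trans _ _ (\sum_(f : {ffun 'I_n -> A}) (\prod_k p (f k)) *
     ((\sum_k h k (f k)) ^+ 2 / t ^+ 2))).
  apply: ler_sum => f _; apply: ler_wpM2l => //.
  case: ifP => [ht|_]; last by rewrite divr_ge0 ?sqr_ge0 ?exprn_ge0 ?ltW.
  rewrite ler_pdivlMr ?exprn_gt0 // mul1r -(real_normK (num_real (\sum_k _))).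
  by rewrite ler_pXn2r // nnegrE // ltW.
under eq_bigr do rewrite mulrA.
rewrite -big_distrl /= ler_pM2r ?invr_gt0 ?exprn_gt0 // iid_expect_sqr_sum.
rewrite mulr_natl -[n in _ *+ n]card_ord -sumr_const; apply: ler_sum => k _.
apply: (@le_trans _ _ (\sum_a p a * B ^+ 2)); last by rewrite -big_distrl /= p_sum1 mul1r.
apply: ler_sum => a _; apply: ler_wpM2l => //.
rewrite -(real_normK (num_real (h k a))).
by rewrite ler_pXn2r // nnegrE // (le_trans _ (hB k a)).
Qed.

End IidChebyshev.

Section Asymptotics.
Variable R : realType.

Lemma near_div_natr_le (a w : R) : 0 < w -> \forall n \near \oo, a / n%:R <= w.
Proof.
move=> w0; apply: filterS (nbhs_infty_gtr (a / w)) => -[|n] lt_n.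
  by rewrite invr0 mulr0 ltW.
have : w * (a / w) = a by rewrite mulrCA divff ?gt_eqF ?mulr1.
by rewrite ler_pdivrMr ?ltr0n //; nra.
Qed.

Lemma exists_mulr_expR_le (a c k w : R) : 0 < c -> 0 < w ->
  exists2 M, a <= M & k * expR (- (c * M)) <= w.
Proof.
move=> c0 w0; have [k_le0|k0] := lerP k 0.
  by exists a => //; rewrite (le_trans _ (ltW w0)) // mulr_le0_ge0 ?expR_ge0.
exists (`|a| + `|ln k - ln w| / c).
  by rewrite (le_trans (ler_norm a)) // lerDl divr_ge0 // ltW.
have le_cM : ln k - ln w <= c * (`|a| + `|ln k - ln w| / c).
  rewrite mulrDr mulrCA divff ?gt_eqF // mulr1 (le_trans (ler_norm _)) //.
  by rewrite lerDr mulr_ge0 // ltW.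
have le_exp : expR (- (c * (`|a| + `|ln k - ln w| / c))) <= w / k.
  by rewrite -[w / k]lnK ?posrE ?divr_gt0 // ler_expR ln_div ?posrE //; lra.
apply: le_trans (ler_wpM2l (ltW k0) le_exp) _.
by rewrite mulrCA divff ?gt_eqF ?mulr1.
Qed.

Lemma cvge_near_ball (f : nat -> \bar R) (u : R) :
  (forall e, 0 < e -> \forall n \near \oo, ((u - e)%:E <= f n <= (u + e)%:E)%E) ->
  f @ \oo --> u%:E.
Proof.
move=> near_ball; apply/fine_cvgP; split.
  apply: filterS (near_ball 1 ltr01) => n /andP[lo hi].
  by rewrite fin_numElt (lt_le_trans _ lo) ?ltNyr // (le_lt_trans hi) ?ltry.
apply/cvgrPdist_le => e e0; apply: filterS (near_ball e e0) => n /=.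
case: (f n) => [r||] /andP[lo hi]; last by rewrite leeNy_eq in lo.
  by rewrite !lee_fin in lo hi; rewrite /= ler_distl; apply/andP; split; lra.
by rewrite leye_eq in hi.
Qed.

End Asymptotics.

Section HypothesisTesting.
Local Open Scope ereal_scope.
Variables (R : realType) (Z : finType) (eps : R).
Variables (F : set {ffun Z -> R}) (Ralt : {ffun Z -> R}).

Definition min_typeII : \bar R :=
  ereal_inf [set (typeII Ralt T)%:E |
             T in [set T | is_test T /\ typeI F T <= eps%:E]].

Lemma DHE : DH eps F Ralt =
  if min_typeII == 0 then +oo else - (ln (fine min_typeII))%:E.
Proof. by []. Qed.

Lemma min_typeII_ge0 : (forall z, (0 <= Ralt z)%R) -> 0 <= min_typeII.
Proof.
move=> Ralt_ge0; apply/ereal_infP => _ [T [T01 _] <-].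
by rewrite lee_fin sumr_ge0 // => z _; rewrite mulr_ge0 //; case/andP: (T01 z).
Qed.

Lemma min_typeII_le_sum : (0 <= eps)%R -> min_typeII <= (\sum_z Ralt z)%:E.
Proof.
move=> eps_ge0; apply: ereal_inf_lbound; exists [ffun=> 1%R].
  split=> [z|]; first by rewrite ffunE lexx ler01.
  apply/ereal_supP => _ [Q _ <-].
  by rewrite lee_fin big1 // => z _; rewrite ffunE subrr mulr0.
by congr EFin; apply: eq_bigr => z _; rewrite ffunE mulr1.
Qed.

Lemma DH_ge_ln (b : R) : (forall z, (0 <= Ralt z)%R) -> (0 < b)%R ->
  min_typeII <= b%:E -> (- ln b)%:E <= DH eps F Ralt.
Proof.
move=> Ralt_ge0 b0; rewrite DHE; have := min_typeII_ge0 Ralt_ge0.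
case: min_typeII => [r||] //= r_ge0 r_le; case: ifPn => [_|nz]; first exact: leey.
have r0 : (0 < r)%R by rewrite lt0r -(@eqe R) nz -lee_fin.
by rewrite lee_fin lerN2 ler_ln ?posrE // -lee_fin.
Qed.

Lemma DH_le_ln (a : R) : (0 <= eps)%R -> (0 < a)%R ->
  a%:E <= min_typeII -> DH eps F Ralt <= (- ln a)%:E.
Proof.
move=> eps_ge0 a0; rewrite DHE; have := min_typeII_le_sum eps_ge0.
case: min_typeII => [r||] //= _ a_le.
have r0 : (0 < r)%R by apply: lt_le_trans a0 _; rewrite -lee_fin.
by rewrite ifF ?eqe ?gt_eqF // lee_fin lerN2 ler_ln ?posrE // -lee_fin.
Qed.

End HypothesisTesting.

Section PairedSequences.
Variables (R : realType) (X Y : finType) (n : nat).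

Definition zipf (x : {ffun 'I_n -> X}) (y : {ffun 'I_n -> Y}) :
  {ffun 'I_n -> X * Y} := [ffun i => (x i, y i)].

Lemma sum_zipf (F : {ffun 'I_n -> X * Y} -> R) :
  \sum_z F z = \sum_(x : {ffun 'I_n -> X}) \sum_(y : {ffun 'I_n -> Y}) F (zipf x y).
Proof.
rewrite pair_bigA /=.
rewrite (reindex (fun xy : {ffun 'I_n -> X} * {ffun 'I_n -> Y} => zipf xy.1 xy.2)) //.
exists (fun z : {ffun 'I_n -> X * Y} => ([ffun i => (z i).1], [ffun i => (z i).2])).
  by move=> [x y] _; congr (_, _); apply/ffunP => i; rewrite !ffunE.
by move=> z _; apply/ffunP => i; rewrite !ffunE -surjective_pairing.
Qed.

Lemma sum_FPX_mul (PX : {ffun X -> R}) (QYn : {ffun {ffun 'I_n -> Y} -> R})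
    (G : {ffun 'I_n -> X * Y} -> R) :
  \sum_z [ffun z : {ffun 'I_n -> X * Y} =>
            (\prod_i PX (z i).1) * QYn [ffun i => (z i).2]] z * G z =
  \sum_(y : {ffun 'I_n -> Y}) QYn y *
    \sum_(x : {ffun 'I_n -> X}) (\prod_i PX (x i)) * G (zipf x y).
Proof.
rewrite sum_zipf exchange_big; apply: eq_bigr => y _.
rewrite big_distrr; apply: eq_bigr => x _; rewrite ffunE.
have -> : [ffun i => (zipf x y i).2] = y by apply/ffunP => i; rewrite !ffunE.
by under eq_bigr do rewrite ffunE; rewrite mulrAC mulrC.
Qed.

Lemma typeI_FPX_le (PX : {ffun X -> R}) (T : {ffun {ffun 'I_n -> X * Y} -> R})
    (eps : R) :
  (typeI (FPX Y PX n) T <= eps%:E)%E <->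
  forall y : {ffun 'I_n -> Y},
    \sum_(x : {ffun 'I_n -> X}) (\prod_i PX (x i)) * (1 - T (zipf x y)) <= eps.
Proof.
split=> [le_eps y|le_eps].
  pose dy : {ffun {ffun 'I_n -> Y} -> R} := [ffun y' => (y' == y)%:R].
  have dy_dist : is_dist dy.
    split=> [y'|]; first by rewrite ffunE ler0n.
    rewrite (bigD1 y) //= ffunE eqxx big1 ?addr0 // => y' ny.
    by rewrite ffunE (negbTE ny).
  have /ereal_supP := le_eps.
  (* the null hypothesis P_X^n x delta_y *)
  move=> /(_ _ (ex_intro2 _ _ _ (ex_intro2 _ _ dy dy_dist erefl) erefl)).
  rewrite lee_fin sum_FPX_mul (bigD1 y) //= ffunE eqxx mul1r.
  rewrite [X in _ + X]big1 ?addr0 // => y' ny.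
  by rewrite ffunE (negbTE ny) mul0r.
apply/ereal_supP => _ [_ [QYn [Q_ge0 Q1] <-] <-].
rewrite lee_fin sum_FPX_mul; apply: (@le_trans _ _ (\sum_y QYn y * eps)).
  by apply: ler_sum => y _; apply: ler_wpM2l.
by rewrite -big_distrl /= Q1 mul1r.
Qed.

Lemma typeII_iid (P : {ffun X * Y -> R}) (T : {ffun {ffun 'I_n -> X * Y} -> R}) :
  typeII (iid n P) T =
  \sum_(y : {ffun 'I_n -> Y}) \sum_(x : {ffun 'I_n -> X})
    (\prod_i P (x i, y i)) * T (zipf x y).
Proof.
rewrite /typeII sum_zipf exchange_big; apply: eq_bigr => y _; apply: eq_bigr => x _.
by rewrite /iid ffunE; congr (_ * _); apply: eq_bigr => i _; rewrite ffunE.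
Qed.

End PairedSequences.

Lemma subr_le_mulr_ln_div (R : realType) (q g : R) : 0 < q -> 0 < g ->
  q - g <= q * ln (q / g).
Proof.
move=> q0 g0; have gq : 0 < g / q by rewrite divr_gt0.
have := @le_ln1Dx R (g / q - 1) ltac:(lra).
rewrite addrCA subrr addr0 -[q / g]invf_div lnV ?posrE //.
have : q * (g / q) = g by rewrite mulrC divfK ?gt_eqF.
nra.
Qed.

Section InformationDensity.
Variables (R : realType) (X Y : finType) (PXY : {ffun X * Y -> R}).
Hypothesis hP : is_dist PXY.
Local Notation PX := (marginalX PXY).

Lemma joint_ge0 xy : 0 <= PXY xy. Proof. by case: hP. Qed.

Lemma marginalX_ge0 x : 0 <= PX x.
Proof. by rewrite ffunE; apply: sumr_ge0 => y _; apply: joint_ge0. Qed.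

Lemma marginalX_sum1 : \sum_x PX x = 1.
Proof.
case: hP => _ <-; under eq_bigr do rewrite ffunE.
by rewrite pair_bigA; apply: eq_bigr => -[].
Qed.

Lemma joint_le_marginalX x y : PXY (x, y) <= PX x.
Proof.
rewrite ffunE (bigD1 y) //= lerDl.
by apply: sumr_ge0 => y' _; apply: joint_ge0.
Qed.

Lemma ln_marginalX_ratio_ge0 x y : PXY (x, y) != 0 -> 0 <= ln (PX x / PXY (x, y)).
Proof.
move=> nz; have pos : 0 < PXY (x, y) by rewrite lt0r nz joint_ge0.
by apply: ln_ge0; rewrite ler_pdivlMr // mul1r joint_le_marginalX.
Qed.

(* Equivalently, D(P_X x delta_y || P_XY) < +oo. *)
Definition admissible y : bool := [forall x, (PXY (x, y) == 0) ==> (PX x == 0)].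

(* The information density, its infinite values replaced by the clipping
   level [M]. *)
Definition llr (M : R) y x : R :=
  if PXY (x, y) == 0 then M else ln (PX x / PXY (x, y)).

Definition llr_bound : R :=
  \sum_(xy | PXY xy != 0) ln (PX xy.1 / PXY xy).

Lemma llr_bound_ge0 : 0 <= llr_bound.
Proof. by apply: sumr_ge0 => -[x y]; apply: ln_marginalX_ratio_ge0. Qed.

Lemma llr_ge0 M y x : 0 <= M -> 0 <= llr M y x.
Proof. by rewrite /llr; case: ifPn => // nz _; apply: ln_marginalX_ratio_ge0. Qed.

Lemma llr_le M y x : llr_bound <= M -> llr M y x <= M.
Proof.
rewrite /llr; case: ifPn => // nz; apply: le_trans.
rewrite /llr_bound (bigD1 (x, y)) //= lerDl.
by apply: sumr_ge0 => -[x' y'] /andP[nz' _]; apply: ln_marginalX_ratio_ge0.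
Qed.

(* For admissible [y], [llr_mean M y] is D(P_X x delta_y || P_XY) whatever [M]. *)
Definition llr_mean M y : R := \sum_x PX x * llr M y x.

Lemma llr_mean_ge0 M y : 0 <= M -> 0 <= llr_mean M y.
Proof.
by move=> M0; apply: sumr_ge0 => x _; rewrite mulr_ge0 ?marginalX_ge0 ?llr_ge0.
Qed.

Lemma llr_mean_le M y : llr_bound <= M -> llr_mean M y <= M.
Proof.
move=> hM; apply: (@le_trans _ _ (\sum_x PX x * M)).
  by apply: ler_sum => x _; rewrite ler_wpM2l ?marginalX_ge0 ?llr_le.
by rewrite -big_distrl /= marginalX_sum1 mul1r.
Qed.

Lemma llr_mean_admissible M y : admissible y -> llr_mean M y = llr_mean 0 y.
Proof.
move=> /forallP adm; apply: eq_bigr => x _; rewrite /llr.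
by case: ifPn => // /eqP z; move: (adm x); rewrite z eqxx => /eqP ->; rewrite !mul0r.
Qed.

(* All masses are at most 1, so this bounds each positive one from below. *)
Definition min_mass : R := \prod_(x | 0 < PX x) PX x.

Lemma min_mass_gt0 : 0 < min_mass.
Proof. exact: prodr_gt0. Qed.

Lemma min_mass_le x : 0 < PX x -> min_mass <= PX x.
Proof.
move=> px; rewrite /min_mass (bigD1 x) //= ler_piMr ?marginalX_ge0 //.
apply: prodr_ile1 => x' /andP[px' _]; rewrite ltW //=.
rewrite -marginalX_sum1 (bigD1 x') //= lerDl.
by apply: sumr_ge0 => *; apply: marginalX_ge0.
Qed.

Lemma llr_mean_inadmissible M y : ~~ admissible y -> 0 <= M ->
  min_mass * M <= llr_mean M y.
Proof.
move=> /forallPn[x]; rewrite negb_imply => /andP[/eqP z nz] M0.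
have px : 0 < PX x by rewrite lt0r nz marginalX_ge0.
rewrite /llr_mean (bigD1 x) //= /llr z eqxx.
apply: (@le_trans _ _ (PX x * M)); first by rewrite ler_wpM2r ?min_mass_le.
by rewrite lerDl; apply: sumr_ge0 => *; rewrite mulr_ge0 ?marginalX_ge0 ?llr_ge0.
Qed.

Definition clipped_mass M : R := \sum_y expR (- llr_mean M y).

Lemma clipped_mass_gt0 M : 0 < clipped_mass M.
Proof.
have [y _|Y0] := pickP (@predT Y).
  rewrite /clipped_mass (bigD1 y) //= ltr_pwDl ?expR_gt0 //.
  by apply: sumr_ge0 => *; apply: expR_ge0.
case: hP => _; rewrite big1 => [/eqP|[x y] _]; first by rewrite eq_sym oner_eq0.
by have := Y0 y.
Qed.

Section Iid.
Variable n : nat.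
Implicit Types (x : {ffun 'I_n -> X}) (y : {ffun 'I_n -> Y}).

Lemma expR_sum_llr M x y : (forall i, PXY (x i, y i) != 0) ->
  expR (\sum_i llr M (y i) (x i)) * \prod_i PXY (x i, y i) = \prod_i PX (x i).
Proof.
move=> nz; rewrite expR_sum -big_split /=; apply: eq_bigr => i _.
have pos : 0 < PXY (x i, y i) by rewrite lt0r nz joint_ge0.
have px : 0 < PX (x i) by apply: lt_le_trans pos (joint_le_marginalX _ _).
by rewrite /llr (negbTE (nz i)) lnK ?divfK ?nz // posrE divr_gt0.
Qed.

Lemma iid_joint_le M x y s : s <= \sum_i llr M (y i) (x i) ->
  \prod_i PXY (x i, y i) <= expR (- s) * \prod_i PX (x i).
Proof.
move=> hs; have PX_ge0 : 0 <= \prod_i PX (x i).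
  by apply: prodr_ge0 => *; apply: marginalX_ge0.
have [i /eqP z|nz] := pickP (fun i => PXY (x i, y i) == 0).
  by rewrite (bigD1 i) //= z mul0r mulr_ge0 ?expR_ge0.
have PXY_ge0 : 0 <= \prod_i PXY (x i, y i) by apply: prodr_ge0 => *; apply: joint_ge0.
rewrite -(expR_sum_llr M (fun i => negbT (nz i))) mulrA -expRD.
by rewrite -[leLHS]mul1r ler_wpM2r // -expR0 ler_expR; lra.
Qed.

Lemma iid_joint_ge M x y s : (forall i, admissible (y i)) ->
  \sum_i llr M (y i) (x i) <= s ->
  expR (- s) * \prod_i PX (x i) <= \prod_i PXY (x i, y i).
Proof.
move=> adm hs; have [i /eqP z|nz] := pickP (fun i => PX (x i) == 0).
  by rewrite (bigD1 i) //= z mul0r mulr0 prodr_ge0 // => *; apply: joint_ge0.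
have nzP i : PXY (x i, y i) != 0.
  by move/forallP/(_ (x i)): (adm i); rewrite nz implybF.
have PXY_ge0 : 0 <= \prod_i PXY (x i, y i) by apply: prodr_ge0 => *; apply: joint_ge0.
by rewrite -(expR_sum_llr M nzP) mulrA -expRD ler_piMl // -expR0 ler_expR; lra.
Qed.

End Iid.

Lemma KL_prod_inadmissible (Q : {ffun Y -> R}) y : 0 < Q y -> ~~ admissible y ->
  KL (prod_dist PX Q) PXY = +oo%E.
Proof.
move=> Qy /forallPn[x]; rewrite negb_imply => /andP[/eqP z nz].
rewrite /KL; case: asboolP => // /(_ (x, y) z); rewrite ffunE => /eqP.
by rewrite mulf_eq0 (negbTE nz) gt_eqF.
Qed.

Lemma KL_prod_admissible (Q : {ffun Y -> R}) : is_dist Q ->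
  (forall y, Q y != 0 -> admissible y) ->
  KL (prod_dist PX Q) PXY =
  (\sum_(y | Q y != 0) Q y * (llr_mean 0 y + ln (Q y)))%:E.
Proof.
move=> [Q_ge0 _] adm.
have Qpos y : Q y != 0 -> 0 < Q y by move=> nz; rewrite lt0r nz Q_ge0.
rewrite /KL asboolT => [|[x y] z]; last first.
  rewrite ffunE /=; have [->|/adm/forallP/(_ x)] := eqVneq (Q y) 0; first by rewrite mulr0.
  by rewrite z eqxx /= => /eqP ->; rewrite mul0r.
congr EFin; transitivity (\sum_y \sum_x
    (if PX x * Q y == 0 then 0 else PX x * Q y * ln (PX x * Q y / PXY (x, y)))).
  by rewrite exchange_big pair_bigA; apply: eq_bigr => -[x y] _; rewrite ffunE.
rewrite [RHS]big_mkcond; apply: eq_bigr => y _.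
have [Qy0|nzQ] := eqVneq (Q y) 0; first by rewrite big1 // => x _; rewrite Qy0 mulr0 eqxx.
have Qy := Qpos y nzQ; have /forallP admy := adm y nzQ.
transitivity (\sum_x (Q y * (PX x * llr 0 y x) + Q y * ln (Q y) * PX x)); last first.
  by rewrite big_split -!big_distrr /= marginalX_sum1 mulr1 -mulrDr.
apply: eq_bigr => x _; have [->|nzX] := eqVneq (PX x) 0.
  by rewrite !mul0r eqxx !mulr0 addr0.
have nzP : PXY (x, y) != 0 by move: (admy x); rewrite (negbTE nzX) implybF.
have PXYpos : 0 < PXY (x, y) by rewrite lt0r nzP joint_ge0.
have PXpos : 0 < PX x by rewrite lt0r nzX marginalX_ge0.
rewrite mulf_eq0 (negbTE nzX) (negbTE nzQ) /llr (negbTE nzP) /= [PX x * Q y / _]mulrAC.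
by rewrite [ln (_ * Q y)]lnM ?posrE ?divr_gt0 //; ring.
Qed.

Lemma umlaut_inadmissible : (forall y, ~~ admissible y) -> umlaut PXY = +oo%E.
Proof.
move=> nadm; apply/eqP; rewrite eq_le leey /=; apply/ereal_infP => _ [Q [Q_ge0 Q1] <-].
have [y Qy|Q0] := pickP (fun y => 0 < Q y).
  by rewrite (KL_prod_inadmissible Qy (nadm y)).
move: Q1; rewrite big1 => [/eqP|y _]; first by rewrite eq_sym oner_eq0.
by apply/eqP; rewrite eq_le Q_ge0 andbT leNgt Q0.
Qed.

Definition gibbs_mass : R := \sum_(y | admissible y) expR (- llr_mean 0 y).

Definition gibbs : {ffun Y -> R} :=
  [ffun y => if admissible y then expR (- llr_mean 0 y) / gibbs_mass else 0].

Lemma clipped_mass_le M : 0 <= M ->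
  clipped_mass M <= gibbs_mass + #|Y|%:R * expR (- (min_mass * M)).
Proof.
move=> M0; rewrite /clipped_mass (bigID admissible) /= lerD //.
  by under eq_bigr => y adm do rewrite (llr_mean_admissible M adm).
apply: (@le_trans _ _ (\sum_(y | ~~ admissible y) expR (- (min_mass * M)))).
  by apply: ler_sum => y nadm; rewrite ler_expR lerN2 llr_mean_inadmissible.
rewrite mulr_natl -sumr_const [leRHS](bigID admissible) /= lerDr.
by apply: sumr_ge0 => *; apply: expR_ge0.
Qed.

Hypothesis some_admissible : exists y, admissible y.

Lemma gibbs_mass_gt0 : 0 < gibbs_mass.
Proof.
have [y adm] := some_admissible.
rewrite /gibbs_mass (bigD1 y) //= ltr_pwDl ?expR_gt0 //.
by apply: sumr_ge0 => *; apply: expR_ge0.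
Qed.

Lemma gibbs_dist : is_dist gibbs.
Proof.
split=> [y|].
  by rewrite ffunE; case: ifP => // _; rewrite divr_ge0 ?expR_ge0 ?ltW ?gibbs_mass_gt0.
rewrite -(divff (lt0r_neq0 gibbs_mass_gt0)) {2}/gibbs_mass big_distrl /= [RHS]big_mkcond.
by apply: eq_bigr => y _; rewrite ffunE; case: ifP; rewrite ?mul0r.
Qed.

Lemma ln_gibbs y : admissible y -> ln (gibbs y) = - llr_mean 0 y - ln gibbs_mass.
Proof.
move=> adm; rewrite ffunE adm ln_div ?posrE ?expR_gt0 ?gibbs_mass_gt0 //.
by rewrite expRK.
Qed.

Lemma KL_prod_ge (Q : {ffun Y -> R}) : is_dist Q ->
  ((- ln gibbs_mass)%:E <= KL (prod_dist PX Q) PXY)%E.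
Proof.
move=> Qd; have [Q_ge0 Q1] := Qd; have [gibbs_ge0 gibbs1] := gibbs_dist.
have [y /andP[Qy nadm]|] := pickP (fun y => (0 < Q y) && ~~ admissible y).
  by rewrite (KL_prod_inadmissible Qy nadm) leey.
move=> adm0; have adm y : Q y != 0 -> admissible y.
  by move=> nz; move: (adm0 y); rewrite lt0r nz Q_ge0 /= => /negbFE.
rewrite KL_prod_admissible // lee_fin.
have term y : Q y != 0 ->
    Q y - gibbs y - ln gibbs_mass * Q y <= Q y * (llr_mean 0 y + ln (Q y)).
  move=> nz; have Qy : 0 < Q y by rewrite lt0r nz Q_ge0.
  have gy : 0 < gibbs y.
    by rewrite ffunE adm // divr_gt0 ?expR_gt0 ?gibbs_mass_gt0.
  have := subr_le_mulr_ln_div Qy gy.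
  by rewrite ln_div ?posrE // ln_gibbs ?adm //; lra.
apply: le_trans (ler_sum _ term).
rewrite !sumrB -big_distrr /= big_rmcond => [|y /negPn/eqP //].
have : \sum_(y | Q y != 0) gibbs y <= 1.
  by rewrite -gibbs1 [leRHS](bigID (fun y => Q y != 0)) /= lerDl sumr_ge0.
by rewrite Q1 mulr1; lra.
Qed.

Lemma KL_prod_gibbs : KL (prod_dist PX gibbs) PXY = (- ln gibbs_mass)%:E.
Proof.
have adm_of y : gibbs y != 0 -> admissible y.
  by apply: contraNT => nadm; rewrite ffunE (negbTE nadm).
rewrite (KL_prod_admissible gibbs_dist adm_of); congr EFin.
transitivity (\sum_(y | gibbs y != 0) gibbs y * - ln gibbs_mass).
  by apply: eq_bigr => y /adm_of adm; rewrite ln_gibbs //; congr (_ * _); ring.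
rewrite -big_distrl /= big_rmcond => [|y /negPn/eqP //].
by have [_ ->] := gibbs_dist; rewrite mul1r.
Qed.

Lemma umlaut_admissible : umlaut PXY = (- ln gibbs_mass)%:E.
Proof.
apply/eqP; rewrite eq_le; apply/andP; split.
  by rewrite -KL_prod_gibbs; apply: ereal_inf_lbound; exists gibbs => //; apply: gibbs_dist.
by apply/ereal_infP => _ [Q Qd <-]; apply: KL_prod_ge.
Qed.

End InformationDensity.

Section LlrTests.
Variables (R : realType) (X Y : finType) (PXY : {ffun X * Y -> R}).
Hypothesis hP : is_dist PXY.
Local Notation PX := (marginalX PXY).
Variables (eps : R) (n : nat) (M d : R).
Hypotheses (n_gt0 : (0 < n)%N) (M_ge : llr_bound PXY <= M) (d_gt0 : 0 < d).

Lemma iid_marginalX_ge0 (x : {ffun 'I_n -> X}) : 0 <= \prod_i PX (x i).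
Proof. by apply: prodr_ge0 => i _; apply: marginalX_ge0. Qed.

Lemma iid_marginalX_sum1 : \sum_(x : {ffun 'I_n -> X}) \prod_i PX (x i) = 1.
Proof.
rewrite -(bigA_distr_bigA (fun (_ : 'I_n) x => PX x)) /=.
by rewrite big1 // => i _; apply: marginalX_sum1.
Qed.

Lemma llr_deviation_tail (y : {ffun 'I_n -> Y}) :
  \sum_(x : {ffun 'I_n -> X}) (\prod_i PX (x i)) *
    (if n%:R * d <= `|\sum_i (llr PXY M (y i) (x i) - llr_mean PXY M (y i))|
     then 1 else 0)
  <= M ^+ 2 / d ^+ 2 / n%:R.
Proof.
have M_ge0 := le_trans (llr_bound_ge0 hP) M_ge.
have n0 : n%:R != 0 :> R by rewrite pnatr_eq0 -lt0n.
have -> : M ^+ 2 / d ^+ 2 / n%:R = n%:R * M ^+ 2 / (n%:R * d) ^+ 2.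
  by field; rewrite n0 gt_eqF.
apply: (iid_chebyshev (marginalX_ge0 hP) (marginalX_sum1 hP)
  (h := fun i x => llr PXY M (y i) x - llr_mean PXY M (y i))).
- move=> k; rewrite (eq_bigr _ (fun x _ => mulrBr _ _ _)) sumrB -big_distrl /=.
  by rewrite marginalX_sum1 // mul1r subrr.
- move=> k x; rewrite ler_norml; have := llr_ge0 hP (y k) x M_ge0.
  have := llr_le hP (y k) x M_ge; have := llr_mean_ge0 hP (y k) M_ge0.
  have := llr_mean_le hP (y k) M_ge; move=> *; apply/andP; split; lra.
- by rewrite mulr_gt0 ?ltr0n.
Qed.

Definition llr_test : {ffun {ffun 'I_n -> X * Y} -> R} :=
  [ffun z : {ffun 'I_n -> X * Y} =>
     if \sum_i llr_mean PXY M (z i).2 - n%:R * d <= \sum_i llr PXY M (z i).2 (z i).1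
     then 1 else 0].

Lemma llr_test_zipf (x : {ffun 'I_n -> X}) (y : {ffun 'I_n -> Y}) :
  llr_test (zipf x y) =
  if \sum_i llr_mean PXY M (y i) - n%:R * d <= \sum_i llr PXY M (y i) (x i)
  then 1 else 0.
Proof.
rewrite ffunE; under eq_bigr do rewrite ffunE.
by under [X in _ <= X]eq_bigr do rewrite ffunE.
Qed.

Lemma llr_test_is_test : is_test llr_test.
Proof. by move=> z; rewrite ffunE; case: ifP; rewrite lexx ler01. Qed.

Lemma llr_test_typeI : M ^+ 2 / d ^+ 2 / n%:R <= eps ->
  (typeI (FPX Y PX n) llr_test <= eps%:E)%E.
Proof.
move=> small; apply/typeI_FPX_le => y.
apply: le_trans _ (le_trans (llr_deviation_tail y) small).
apply: ler_sum => x _; rewrite llr_test_zipf ler_wpM2l ?iid_marginalX_ge0 //.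
case: ifPn => [_|]; first by rewrite subrr; case: ifP.
rewrite -ltNge subr0 sumrB => lt_llr; rewrite ifT //.
by rewrite ler_normr; apply/orP; right; lra.
Qed.

Lemma llr_test_typeII :
  typeII (iid n PXY) llr_test <= expR (n%:R * d) * clipped_mass PXY M ^+ n.
Proof.
rewrite typeII_iid.
apply: (@le_trans _ _ (\sum_(y : {ffun 'I_n -> Y})
   expR (- (\sum_i llr_mean PXY M (y i) - n%:R * d)))).
  apply: ler_sum => y _; set s := (X in expR (- X)).
  apply: (@le_trans _ _ (\sum_(x : {ffun 'I_n -> X}) expR (- s) * \prod_i PX (x i))).
    apply: ler_sum => x _; rewrite llr_test_zipf; case: ifP => [le_llr|_].
      by rewrite mulr1 (iid_joint_le hP le_llr).
    by rewrite mulr0 mulr_ge0 ?expR_ge0 ?iid_marginalX_ge0.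
  by rewrite -big_distrr /= iid_marginalX_sum1 mulr1.
rewrite -[k in _ ^+ k]card_ord -prodr_const bigA_distr_bigA big_distrr /=.
by apply: ler_sum => y _; rewrite opprB expRD -sumrN expR_sum.
Qed.

Lemma min_typeII_achievable : M ^+ 2 / d ^+ 2 / n%:R <= eps ->
  (min_typeII eps (FPX Y PX n) (iid n PXY) <=
   (expR (n%:R * d) * clipped_mass PXY M ^+ n)%:E)%E.
Proof.
move=> small; apply: le_trans (ereal_inf_lbound _) _.
  by exists llr_test => //; split; [apply: llr_test_is_test | apply: llr_test_typeI].
by rewrite lee_fin llr_test_typeII.
Qed.

Section Converse.
Variable T : {ffun {ffun 'I_n -> X * Y} -> R}.
Hypotheses (T_test : is_test T) (T_typeI : (typeI (FPX Y PX n) T <= eps%:E)%E).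
Hypothesis small : M ^+ 2 / d ^+ 2 / n%:R <= (1 - eps) / 2.

Lemma typeII_section_ge (y : {ffun 'I_n -> Y}) : (forall i, admissible PXY (y i)) ->
  expR (- (\sum_i llr_mean PXY M (y i) + n%:R * d)) * ((1 - eps) / 2) <=
  \sum_(x : {ffun 'I_n -> X}) (\prod_i PXY (x i, y i)) * T (zipf x y).
Proof.
move=> adm; set s := _ + _.
pose far (x : {ffun 'I_n -> X}) : R := if s < \sum_i llr PXY M (y i) (x i) then 1 else 0.
have T01 x := T_test (zipf x y).
have pointwise (x : {ffun 'I_n -> X}) :
    expR (- s) * ((\prod_i PX (x i)) * T (zipf x y) - (\prod_i PX (x i)) * far x)
    <= (\prod_i PXY (x i, y i)) * T (zipf x y).
  have PXY_ge0 : 0 <= \prod_i PXY (x i, y i) by apply: prodr_ge0 => i _; apply: joint_ge0.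
  have e0 := expR_gt0 (- s); have px := iid_marginalX_ge0 x.
  case/andP: (T01 x) => T0 T1; rewrite /far; case: ltP => [_|le_s].
    rewrite -mulrBr (le_trans _ (mulr_ge0 PXY_ge0 T0)) //.
    by rewrite pmulr_rle0 //; apply: mulr_ge0_le0; rewrite // subr_le0.
  rewrite mulr0 subr0 mulrA; apply: ler_wpM2r => //.
  exact (iid_joint_ge hP adm le_s).
apply: le_trans (ler_sum _ (fun x _ => pointwise x)); rewrite -big_distrr /= sumrB.
rewrite ler_wpM2l ?expR_ge0 //.
have accept : 1 - eps <= \sum_(x : {ffun 'I_n -> X}) (\prod_i PX (x i)) * T (zipf x y).
  have := (typeI_FPX_le _ _ _).1 T_typeI y.
  by under eq_bigr do rewrite mulrBr mulr1; rewrite sumrB iid_marginalX_sum1; lra.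
have far_small : \sum_(x : {ffun 'I_n -> X}) (\prod_i PX (x i)) * far x <= (1 - eps) / 2.
  apply: le_trans (le_trans (llr_deviation_tail y) small); apply: ler_sum => x _.
  rewrite ler_wpM2l ?iid_marginalX_ge0 // /far; case: ifPn => [lt_s|_]; last by case: ifP.
  by rewrite ifT // ler_normr sumrB; apply/orP; left; rewrite /s in lt_s; lra.
lra.
Qed.

Lemma typeII_converse :
  (1 - eps) / 2 * expR (- (n%:R * d)) * gibbs_mass PXY ^+ n <= typeII (iid n PXY) T.
Proof.
pose g y := if admissible PXY y then expR (- llr_mean PXY 0 y) else 0.
have -> : gibbs_mass PXY ^+ n = \sum_(y : {ffun 'I_n -> Y}) \prod_i g (y i).
  by rewrite /gibbs_mass big_mkcond -[k in _ ^+ k]card_ord -prodr_const bigA_distr_bigA.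
rewrite typeII_iid big_distrr /=; apply: ler_sum => y _.
have [adm|] := boolP [forall i, admissible PXY (y i)]; last first.
  move=> /forallPn[i nadm]; rewrite (bigD1 i) //= /g (negbTE nadm) mul0r mulr0.
  apply: sumr_ge0 => x _; case/andP: (T_test (zipf x y)) => T0 _.
  by rewrite mulr_ge0 ?prodr_ge0 // => j _; apply: joint_ge0.
move/forallP: adm => adm; apply: le_trans (typeII_section_ge adm).
rewrite /g (eq_bigr (fun i => expR (- llr_mean PXY M (y i)))) => [|i _]; last first.
  by rewrite adm (llr_mean_admissible _ (adm i)).
by rewrite -expR_sum sumrN opprD expRD; lra.
Qed.

End Converse.

Lemma min_typeII_converse : M ^+ 2 / d ^+ 2 / n%:R <= (1 - eps) / 2 ->
  (((1 - eps) / 2 * expR (- (n%:R * d)) * gibbs_mass PXY ^+ n)%:E <=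
   min_typeII eps (FPX Y PX n) (iid n PXY))%E.
Proof.
move=> small; apply/ereal_infP => _ [T [T_test T_typeI] <-].
by rewrite lee_fin typeII_converse.
Qed.

End LlrTests.

Section Rate.
Variables (R : realType) (X Y : finType) (PXY : {ffun X * Y -> R}).
Hypothesis hP : is_dist PXY.
Variable eps : R.
Hypotheses (eps_gt0 : 0 < eps) (eps_lt1 : eps < 1).

Definition rate (n : nat) : \bar R :=
  ((n%:R)^-1)%:E * DH eps (FPX Y (marginalX PXY) n) (iid n PXY).

Lemma iid_ge0 n (z : {ffun 'I_n -> X * Y}) : 0 <= iid n PXY z.
Proof. by rewrite ffunE prodr_ge0 // => i _; apply: joint_ge0. Qed.

Lemma rate_ge n M d : (0 < n)%N -> llr_bound PXY <= M -> 0 < d ->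
  M ^+ 2 / d ^+ 2 / n%:R <= eps -> ((- (d + ln (clipped_mass PXY M)))%:E <= rate n)%E.
Proof.
move=> n0 M_ge d0 small; have Z0 := clipped_mass_gt0 hP M.
have b0 : 0 < expR (n%:R * d) * clipped_mass PXY M ^+ n.
  by rewrite mulr_gt0 ?expR_gt0 ?exprn_gt0.
have := DH_ge_ln (@iid_ge0 n) b0 (min_typeII_achievable hP n0 M_ge d0 small).
move=> le_DH; have n_ne0 : n%:R != 0 :> R by rewrite pnatr_eq0 -lt0n.
have -> : - (d + ln (clipped_mass PXY M)) =
    n%:R^-1 * - ln (expR (n%:R * d) * clipped_mass PXY M ^+ n).
  by rewrite lnM ?posrE ?expR_gt0 ?exprn_gt0 // expRK lnXn // -mulr_natl; field.
by rewrite EFinM lee_wpmul2l // lee_fin invr_ge0.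
Qed.

Lemma rate_le n M d : (exists y, admissible PXY y) -> (0 < n)%N ->
  llr_bound PXY <= M -> 0 < d -> M ^+ 2 / d ^+ 2 / n%:R <= (1 - eps) / 2 ->
  (rate n <= (d - ln (gibbs_mass PXY) - ln ((1 - eps) / 2) / n%:R)%:E)%E.
Proof.
move=> adm n0 M_ge d0 small; have Z0 := gibbs_mass_gt0 adm.
have c0 : 0 < (1 - eps) / 2 by rewrite divr_gt0 // subr_gt0.
have a0 : 0 < (1 - eps) / 2 * expR (- (n%:R * d)) * gibbs_mass PXY ^+ n.
  by rewrite mulr_gt0 ?exprn_gt0 // mulr_gt0 ?expR_gt0.
have := DH_le_ln (ltW eps_gt0) a0 (min_typeII_converse hP n0 M_ge d0 small).
move=> le_DH; have n_ne0 : n%:R != 0 :> R by rewrite pnatr_eq0 -lt0n.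
have -> : d - ln (gibbs_mass PXY) - ln ((1 - eps) / 2) / n%:R =
    n%:R^-1 * - ln ((1 - eps) / 2 * expR (- (n%:R * d)) * gibbs_mass PXY ^+ n).
  rewrite [ln (_ * _ ^+ n)]lnM ?posrE ?exprn_gt0 ?(mulr_gt0 c0 (expR_gt0 _)) //.
  rewrite [ln (_ * expR _)]lnM ?posrE ?expR_gt0 // expRK lnXn // -mulr_natl.
  by field.
by rewrite EFinM lee_wpmul2l // lee_fin invr_ge0.
Qed.

Lemma rate_cvg_admissible : (exists y, admissible PXY y) ->
  rate @ \oo --> (- ln (gibbs_mass PXY))%:E.
Proof.
move=> adm; have Z0 := gibbs_mass_gt0 adm.
have c0 : 0 < (1 - eps) / 2 by rewrite divr_gt0 // subr_gt0.
apply: cvge_near_ball => e e0; have d0 : 0 < e / 3 by rewrite divr_gt0.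
have [M M_ge tail] := exists_mulr_expR_le (llr_bound PXY) #|Y|%:R
  (min_mass_gt0 PXY) (mulr_gt0 Z0 d0).
have ln_clipped_mass : ln (clipped_mass PXY M) <= ln (gibbs_mass PXY) + e / 3.
  have M0 := le_trans (llr_bound_ge0 hP) M_ge.
  have d1 : 0 < 1 + e / 3 by rewrite addr_gt0.
  apply: (@le_trans _ _ (ln (gibbs_mass PXY * (1 + e / 3)))).
    rewrite ler_ln ?posrE ?clipped_mass_gt0 ?mulr_gt0 //.
    by apply: le_trans (clipped_mass_le hP M0) _; rewrite mulrDr mulr1 lerD2l.
  by rewrite lnM ?posrE // lerD2l le_ln1Dx // (lt_trans _ d0) // ltrN10.
near=> n.
have n0 : (0 < n)%N by near: n; apply: nbhs_infty_gt.
have small1 : M ^+ 2 / (e / 3) ^+ 2 / n%:R <= eps by near: n; apply: near_div_natr_le.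
have small2 : M ^+ 2 / (e / 3) ^+ 2 / n%:R <= (1 - eps) / 2.
  by near: n; apply: near_div_natr_le.
have small3 : - ln ((1 - eps) / 2) / n%:R <= e / 3 by near: n; apply: near_div_natr_le.
have lo := rate_ge n0 M_ge d0 small1; have hi := rate_le adm n0 M_ge d0 small2.
apply/andP; split; [apply: le_trans lo | apply: le_trans hi _]; rewrite lee_fin; lra.
Unshelve. all: end_near. Qed.

Lemma rate_cvg_inadmissible : (forall y, ~~ admissible PXY y) -> rate @ \oo --> +oo%E.
Proof.
move=> nadm; apply/cvgeyPge => A.
have Z0 : gibbs_mass PXY = 0 by rewrite /gibbs_mass big_pred0 // => y; apply/negbTE.
have [M M_ge tail] := exists_mulr_expR_le (llr_bound PXY) #|Y|%:R
  (min_mass_gt0 PXY) (expR_gt0 (- (A + 1))).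
have ln_clipped_mass : ln (clipped_mass PXY M) <= - (A + 1).
  have M0 := le_trans (llr_bound_ge0 hP) M_ge.
  rewrite -ler_expR lnK ?posrE ?clipped_mass_gt0 //.
  by apply: le_trans (clipped_mass_le hP M0) _; rewrite Z0 add0r.
near=> n.
have n0 : (0 < n)%N by near: n; apply: nbhs_infty_gt.
have small : M ^+ 2 / 1 ^+ 2 / n%:R <= eps by near: n; apply: near_div_natr_le.
by apply: le_trans (rate_ge n0 M_ge ltr01 small); rewrite lee_fin; lra.
Unshelve. all: end_near. Qed.

End Rate.

Unset Implicit Arguments. Set Strict Implicit.
Theorem mainTheorem4 (R : realType) (X Y : finType) (PXY : {ffun X * Y -> R})
  (hP : is_dist PXY) (eps : R) (heps0 : 0 < eps) (heps1 : eps < 1) :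
  ((fun n : nat => ((n%:R)^-1)%:E * DH eps (FPX Y (marginalX PXY) n) (iid n PXY))%E
     @ \oo --> umlaut PXY).
Proof.
have [/existsP adm|/existsPn nadm] := boolP [exists y, admissible PXY y].
  by rewrite (umlaut_admissible hP adm); apply: rate_cvg_admissible.
by rewrite (umlaut_inadmissible nadm); apply: rate_cvg_inadmissible.
Qed.
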